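(* Let $\psi, f: S^2\times H\to\mathbb{R}$ be functions for which the integrals below exist, and define the spherical voxel convolution at $p\in S^2\times H$ by $$[\psi\star f](p) = \int_0^{2\pi}\int_{SO(3)}\psi_\mathcal{T}(R^{-1}\mathcal{T}(p))\,f_\mathcal{T}(RZ(\gamma))\,dR\,d\gamma .$$ Suppose that $\psi_\mathcal{T}(R)=\psi_\mathcal{T}(RZ(\theta))$ for all $R\in SO(3)$ and all angles $\theta$. Then for every $Q\in SO(3)$ and every $p\in S^2\times H$, $$[\psi\star L_Qf](Qp) = [\psi\star f](p).$$
   Context: $Z(\theta)$, $Y(\theta)$ are the rotation matrices about the $z$- and $y$-axes by angle $\theta$; $n=(0,0,1)^T$; points of $S^2$ are $s(\alpha,\beta)=Z(\alpha)Y(\beta)n$ with $\alpha\in[0,2\pi]$, $\beta\in[0,\pi]$; $H=[0,1]$; $Q\in SO(3)$ acts on $S^2\times H$ by $Q(s,h)=(Qs,h)$. The map $\mathcal{T}: S^2\times H\to SO(3)$ is $\mathcal{T}(s(\alpha,\beta),h)=Z(\alpha)Y(\beta)Z(2\pi h)$, which is a bijection almost everywhere. For a function $g$ on $S^2\times H$, its adjoint function on $SO(3)$ is $g_\mathcal{T}(R)=g(\mathcal{T}^{-1}(R))$ (defined almost everywhere). The rotation operator is $[L_Qf](x)=f(Q^{-1}x)$. $dR$ is Haar measure on $SO(3)$ and $d\gamma$ is Lebesgue measure on $[0,2\pi]$. *)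

From HB Require Import structures.
From mathcomp Require Import all_boot all_order all_algebra.
From mathcomp Require Import all_classical all_reals all_analysis.
Set Implicit Arguments. Unset Strict Implicit. Unset Printing Implicit Defensive.
Import Order.TTheory GRing.Theory Num.Theory numFieldNormedType.Exports.
Local Open Scope classical_set_scope.
Local Open Scope ring_scope.

Section Defs.
Variable R : realType.

Definition mx3 (a b c d e f g h i : R) : 'M[R]_3 :=
  \matrix_(k < 3, l < 3)
    nth 0 (nth [::] [:: [:: a; b; c]; [:: d; e; f]; [:: g; h; i]] k) l.

Definition Zrot (t : R) : 'M[R]_3 :=
  mx3 (cos t) (- sin t) 0
      (sin t) (cos t)   0
      0       0         1.

Definition Yrot (t : R) : 'M[R]_3 :=
  mx3 (cos t)   0 (sin t)
      0         1 0
      (- sin t) 0 (cos t).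

Definition nvec : 'cV[R]_3 := \col_(k < 3) (if val k == 2%N then 1 else 0).

Definition sph (a b : R) : 'cV[R]_3 := Zrot a *m Yrot b *m nvec.

Definition angles_ok (ab : R * R) : Prop :=
  0 <= ab.1 <= 2 * pi /\ 0 <= ab.2 <= pi.

Definition S2 : set 'cV[R]_3 :=
  [set s | exists ab, angles_ok ab /\ s = sph ab.1 ab.2].

Definition S2H : set ('cV[R]_3 * R) :=
  [set p | S2 p.1 /\ 0 <= p.2 <= 1].

Definition SO3 : set 'M[R]_3 :=
  [set M | M^T *m M = 1%:M /\ \det M = 1].

(* the map T(s(alpha,beta), h) = Z(alpha) Y(beta) Z(2 pi h);
   spherical coordinates (alpha, beta) of s are chosen (they are unique
   except at the poles / alpha in {0, 2pi}) *)
Definition Tmap (p : 'cV[R]_3 * R) : 'M[R]_3 :=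
  let ab := xget (0, 0) [set ab | angles_ok ab /\ sph ab.1 ab.2 = p.1] in
  Zrot ab.1 *m Yrot ab.2 *m Zrot (2 * pi * p.2).

(* an inverse of T (T is a bijection almost everywhere; a preimage in
   S^2 x H is chosen) *)
Definition Tinv (M : 'M[R]_3) : 'cV[R]_3 * R :=
  xget (nvec, 0) [set p | S2H p /\ Tmap p = M].

Definition adjT (g : 'cV[R]_3 * R -> R) (M : 'M[R]_3) : R := g (Tinv M).

Definition actQ (Q : 'M[R]_3) (p : 'cV[R]_3 * R) : 'cV[R]_3 * R :=
  (Q *m p.1, p.2).

Definition LQ (Q : 'M[R]_3) (f : 'cV[R]_3 * R -> R) (p : 'cV[R]_3 * R) : R :=
  f (actQ (invmx Q) p).

(* SO(3) as a measurable space with the Borel sigma-algebra of matrices *)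
Definition MXB : Type := g_sigma_algebraType (open : set (set 'M[R]_(3, 3))).

(* mu is the (normalised) Haar measure of SO(3): concentrated on SO(3),
   total mass 1, left-invariant *)
Definition haar (mu : {measure set MXB -> \bar R}) : Prop :=
  [/\ mu (~` (SO3 : set MXB)) = 0%E,
      mu (SO3 : set MXB) = 1%E &
      forall Q : 'M[R]_3, SO3 Q -> forall A : set MXB, measurable A ->
        mu ((fun M : MXB => (Q *m M : MXB)) @^-1` A) = mu A].

(* integrand of the spherical voxel convolution, as a function of (R, gamma) *)
Definition conv_integrand (psi f : 'cV[R]_3 * R -> R) (p : 'cV[R]_3 * R)
  (z : MXB * R) : R :=
  adjT psi (invmx z.1 *m Tmap p) * adjT f (z.1 *m Zrot z.2).

Definition conv_dom : set (MXB * R) := (SO3 : set MXB) `*` `[0, 2 * pi].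

Definition sconv (mu : {measure set MXB -> \bar R}) (psi f : 'cV[R]_3 * R -> R)
  (p : 'cV[R]_3 * R) : R :=
  Rintegral (mu \x lebesgue_measure)%E conv_dom (conv_integrand psi f p).

End Defs.

(* For M in SO(3), T^-1(M Z(g)) = (M n, h(g)) where 2 pi h(g) = th + g modulo 2 pi, for a
   phase th depending only on M.  Since T(Q p) = Q T(p) Z(phi) and psi_T is right
   Z-invariant, the integrand of [psi * L_Q f](Q p) at (M, g) and that of [psi * f](p) at
   (Q^T M, g) are both c * f(Q^T M n, h(g)), with the same constant c but different phases.
   The integral over g of k(h(g)) does not depend on the phase: it is the integral of
   k(x / 2 pi) over ]0, 2 pi[.  Tonelli and the left invariance of the Haar measure under
   M |-> Q^T M conclude, applied to the positive and negative parts of the integrands. *)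

From HB Require Import structures.
From mathcomp Require Import all_boot all_order all_algebra.
From mathcomp Require Import all_classical all_reals all_analysis.
From mathcomp Require Import measurable_realfun.
From mathcomp Require Import ring lra.
Set Implicit Arguments. Unset Strict Implicit. Unset Printing Implicit Defensive.
Import Order.TTheory GRing.Theory Num.Theory numFieldNormedType.Exports.
Local Open Scope classical_set_scope.
Local Open Scope ring_scope.

Section Rotations.
Variable R : realType.
Implicit Types (A M N Q : 'M[R]_3) (s v : 'cV[R]_3) (p : 'cV[R]_3 * R) (a b t : R).

Lemma sum_ord3 (F : 'I_3 -> R) :
  \sum_(k < 3) F k = F ord0 + F (lift ord0 ord0) + F (lift ord0 (lift ord0 ord0)).
Proof. by rewrite !big_ord_recl big_ord0 addr0 addrA. Qed.

(* Entries indexed by [nat]: [A 1 1] (a ring numeral of ['I_3]) and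
   [A (lift ord0 ord0) (lift ord0 ord0)] both become [mxe A 1 1], so that
   [ring] and [nra] see one atom per entry. *)
Definition mxe A (i j : nat) : R := A (inord i) (inord j).

Lemma mxeE A (i j : 'I_3) : A i j = mxe A i j.
Proof. by rewrite /mxe !inord_val. Qed.

Ltac mx3_ext :=
  apply/matrixP; move=> [[|[|[|?]]] ?] [[|[|[|?]]] ?] //;
  rewrite ?(mxE, sum_ord3) /=.

Ltac col3_ext :=
  apply/matrixP; move=> [[|[|[|?]]] ?] [[|?] ?] //; rewrite ?(mxE, sum_ord3) /=.

Lemma det_mx33 A : \det A =
  A 0 0 * (A 1 1 * A 2 2 - A 1 2 * A 2 1)
  - A 0 1 * (A 1 0 * A 2 2 - A 1 2 * A 2 0)
  + A 0 2 * (A 1 0 * A 2 1 - A 1 1 * A 2 0).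
Proof.
rewrite (expand_det_row _ ord0) sum_ord3 /cofactor.
rewrite !(expand_det_row _ ord0) !big_ord_recl !big_ord0 /cofactor.
by rewrite !det_mx11 !mxE /= !mxeE /= expr0 expr1; ring.
Qed.

Lemma Zrot_add a b : Zrot a *m Zrot b = Zrot (a + b) :> 'M[R]_3.
Proof. by mx3_ext; rewrite ?cosD ?sinD; ring. Qed.

Lemma Zrot_eq_cos_sin a b : Zrot a = Zrot b :> 'M[R]_3 -> cos a = cos b /\ sin a = sin b.
Proof.
move=> eab; have e00 := congr1 (fun A : 'M[R]_3 => A 0 0) eab.
by have := congr1 (fun A : 'M[R]_3 => A 1 0) eab; move: e00; rewrite !mxE.
Qed.

Lemma SO3_Zrot t : SO3 (Zrot t : 'M[R]_3).
Proof.
have := cos2Dsin2 t; split; first by mx3_ext; nra.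
by rewrite det_mx33 !mxE /=; nra.
Qed.

Lemma SO3_Yrot t : SO3 (Yrot t : 'M[R]_3).
Proof.
have := cos2Dsin2 t; split; first by mx3_ext; nra.
by rewrite det_mx33 !mxE /=; nra.
Qed.

Lemma SO3_mulmxtr A : SO3 A -> A *m A^T = 1%:M.
Proof. by case=> /mulmx1C. Qed.

Lemma SO3_unitmx A : SO3 A -> A \in unitmx.
Proof. by case=> AtA _; case: (mulmx1_unit AtA). Qed.

Lemma SO3_invmx A : SO3 A -> invmx A = A^T.
Proof.
move=> hA; rewrite -[invmx A]mulmx1 -(SO3_mulmxtr hA) mulmxA.
by rewrite mulVmx ?mul1mx ?SO3_unitmx.
Qed.

Lemma SO3_mulmxI A (X Y : 'M[R]_3) : SO3 A -> A *m X = A *m Y -> X = Y.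
Proof. by move=> /SO3_unitmx Aunit AXY; rewrite -[X](mulKmx Aunit) AXY mulKmx. Qed.

Lemma SO3_mul A B : SO3 A -> SO3 B -> SO3 (A *m B).
Proof.
move=> [AtA dA] [BtB dB]; split; last by rewrite det_mulmx dA dB mulr1.
by rewrite trmx_mul mulmxA -(mulmxA B^T) AtA mulmx1 BtB.
Qed.

Lemma SO3_tr A : SO3 A -> SO3 A^T.
Proof.
move=> hA; split; last by rewrite det_tr; case: hA.
by rewrite trmxK SO3_mulmxtr.
Qed.

Lemma periodicz (f : R -> R) T : periodic f T -> forall (k : int) x, f (x + T *~ k) = f x.
Proof.
move=> fT [n|n] x; first by rewrite -pmulrn periodicn.
by rewrite NegzE mulrNz -[in RHS](subrK (T *+ n.+1) x) periodicn.
Qed.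

Lemma Zrot_add2pi t : Zrot (t + 2 * pi) = Zrot t :> 'M[R]_3.
Proof. by rewrite /Zrot [2 * pi]mulr_natl cosD2pi sinD2pi. Qed.

Lemma Zrot_mod2pi t : exists2 u, 0 <= u < 2 * pi & Zrot u = Zrot t :> 'M[R]_3.
Proof.
have pi_gt0 := pi_gt0 R; set k := Num.floor (t / (2 * pi)).
have /andP[kt tk] := floor_itv (t / (2 * pi)); rewrite -/k intrD in kt tk.
have tE : t / (2 * pi) * (2 * pi) = t by rewrite mulfVK //; lra.
set x := t / (2 * pi) in kt tk tE.
exists (t - 2 * pi * k%:~R); first by apply/andP; split; nra.
have -> : t - 2 * pi * k%:~R = t + (pi *+ 2) *~ - k.
  by rewrite mulrNz -mulrzr; ring.
by rewrite /Zrot (periodicz (@cosD2pi R)) (periodicz (@sinD2pi R)).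
Qed.

Lemma exists_angle (c s : R) : c ^+ 2 + s ^+ 2 = 1 ->
  exists t, 0 <= t <= 2 * pi /\ cos t = c /\ sin t = s.
Proof.
move=> cs1; have pi_gt0 := pi_gt0 R.
have c_itv : -1 <= c <= 1 by have s2 := sqr_ge0 s; apply/andP; split; nra.
have sqrt_s : Num.sqrt (1 - c ^+ 2) = `|s| by rewrite -sqrtr_sqr; congr Num.sqrt; lra.
have acos_ge := acos_ge0 c_itv; have acos_le := acos_lepi c_itv.
have [s_ge0|s_lt0] := leP 0 s.
  exists (acos c); split; first lra.
  by rewrite acosK ?in_itv //= sin_acos // sqrt_s ger0_norm.
exists (- acos c + pi *+ 2); split; first lra.
by rewrite cosD2pi sinD2pi cosN sinN acosK ?in_itv //= sin_acos // sqrt_s ltr0_norm ?opprK.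
Qed.

Definition col3 (x y z : R) : 'cV[R]_3 := \col_(k < 3) nth 0 [:: x; y; z] k.

Lemma sph_col3 a b : sph a b = col3 (cos a * sin b) (sin a * sin b) (cos b).
Proof. by rewrite /sph; col3_ext; ring. Qed.

Lemma col3E v : v = col3 (v 0 0) (v 1 0) (v 2 0).
Proof. by col3_ext; congr (v _ _); apply/val_inj. Qed.

Lemma mulmx_nvec M : M *m nvec R = col3 (M 0 2) (M 1 2) (M 2 2).
Proof. by col3_ext; rewrite ?mulr0 ?mulr1 ?add0r; congr (M _ _); apply/val_inj. Qed.

Lemma S2_unit v : v 0 0 ^+ 2 + v 1 0 ^+ 2 + v 2 0 ^+ 2 = 1 -> S2 v.
Proof.
move=> v1; rewrite [v]col3E; move: (v 0 0) (v 1 0) (v 2 0) v1 => x y z v1.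
have x2 := sqr_ge0 x; have y2 := sqr_ge0 y.
have z_itv : -1 <= z <= 1 by apply/andP; split; nra.
set r := Num.sqrt (1 - z ^+ 2).
have r2 : r ^+ 2 = x ^+ 2 + y ^+ 2 by rewrite sqr_sqrtr; lra.
have r_ge0 : 0 <= r by rewrite sqrtr_ge0.
have [t [t_itv [xt yt]]] : exists t, 0 <= t <= 2 * pi /\ cos t * r = x /\ sin t * r = y.
  have [r0|r_neq0] := eqVneq r 0.
    have xy0 : x ^+ 2 + y ^+ 2 = 0 by rewrite -r2 r0 expr0n.
    have x0 : x = 0 by apply/eqP; rewrite -sqrf_eq0; apply/eqP; lra.
    have y0 : y = 0 by apply/eqP; rewrite -sqrf_eq0; apply/eqP; lra.
    by exists 0; rewrite r0 x0 y0 !mulr0; split => //; have := pi_gt0 R; lra.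
  have [t [t_itv [ct st]]] : exists t, 0 <= t <= 2 * pi /\ cos t = x / r /\ sin t = y / r.
    by apply: exists_angle; rewrite !expr_div_n -mulrDl -r2 divff ?expf_neq0.
  by exists t; rewrite ct st !divfK.
exists (t, acos z); split; first by split => //=; rewrite acos_ge0 ?acos_lepi.
by rewrite sph_col3 /= sin_acos // acosK ?in_itv //= -/r xt yt.
Qed.

Lemma SO3_nvec_S2 M : SO3 M -> S2 (M *m nvec R).
Proof.
move=> [MtM _]; apply: S2_unit; rewrite mulmx_nvec /col3 !mxE /=.
have := congr1 (fun A : 'M[R]_3 => A 2 2) MtM; rewrite ?(mxE, sum_ord3) /= !mxeE /=.
by move=> MtM22; nra.
Qed.

Lemma Zrot_nvec t : Zrot t *m nvec R = nvec R.
Proof. by rewrite mulmx_nvec; col3_ext. Qed.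

Lemma SO3_fix_nvec N : SO3 N -> N *m nvec R = nvec R -> exists t, N = Zrot t.
Proof.
move=> N_SO3; have [NtN detN] := N_SO3; have NNt := SO3_mulmxtr N_SO3.
rewrite mulmx_nvec => /matrixP Nn.
have := Nn 0 0; have := Nn 1 0; have := Nn 2 0.
have := congr1 (fun A : 'M[R]_3 => A 0 0) NtN; have := congr1 (fun A : 'M[R]_3 => A 1 1) NtN.
have := congr1 (fun A : 'M[R]_3 => A 0 1) NtN; have := congr1 (fun A : 'M[R]_3 => A 2 2) NNt.
rewrite det_mx33 in detN; move: detN; rewrite ?(mxE, sum_ord3) /= !mxeE /=.
move=> detN n22 n01 n11 n00 N22 N12 N02.
have N2 : mxe N 2 0 ^+ 2 + mxe N 2 1 ^+ 2 = 0 by nra.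
have N20 : mxe N 2 0 = 0 by apply/eqP; rewrite -sqrf_eq0; apply/eqP; nra.
have N21 : mxe N 2 1 = 0 by apply/eqP; rewrite -sqrf_eq0; apply/eqP; nra.
rewrite N02 N12 N22 N20 N21 in detN n00 n11 n01.
(* The upper-left 2x2 block of [N] is orthogonal with determinant 1. *)
have sq0 : (mxe N 1 1 - mxe N 0 0) ^+ 2 + (mxe N 0 1 + mxe N 1 0) ^+ 2 = 0 by nra.
have N11 : mxe N 1 1 = mxe N 0 0.
  by apply/eqP; rewrite -subr_eq0 -sqrf_eq0; apply/eqP; nra.
have N01 : mxe N 0 1 = - mxe N 1 0.
  by apply/eqP; rewrite -addr_eq0 -sqrf_eq0; apply/eqP; nra.
have [t [_ [ct st]]] := @exists_angle (mxe N 0 0) (mxe N 1 0) ltac:(nra).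
exists t; apply/matrixP => i j; rewrite mxeE.
by case: i => [[|[|[|?]]] ?]; case: j => [[|[|[|?]]] ?] //; rewrite !mxE /= ?ct ?st.
Qed.

Lemma SO3_same_nvec A M : SO3 A -> SO3 M -> A *m nvec R = M *m nvec R ->
  exists t, M = A *m Zrot t.
Proof.
move=> A_SO3 M_SO3 AMn.
have AtM_SO3 : SO3 (A^T *m M) by apply: SO3_mul => //; exact: SO3_tr.
have [t AtM] : exists t, A^T *m M = Zrot t.
  apply: SO3_fix_nvec => //.
  by rewrite -mulmxA -AMn mulmxA; case: A_SO3 => -> _; rewrite mul1mx.
by exists t; rewrite -AtM mulmxA SO3_mulmxtr // mul1mx.
Qed.

Lemma Zrot_turn t : exists h, 0 <= h <= 1 /\ Zrot (2 * pi * h) = Zrot t :> 'M[R]_3.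
Proof.
have [u /andP[u_ge0 u_lt] <-] := Zrot_mod2pi t; have pi_gt0 := pi_gt0 R.
exists (u / (2 * pi)); rewrite [2 * pi * _]mulrC divfK; last lra.
by split => //; apply/andP; split; [apply: divr_ge0 | rewrite ler_pdivrMr ?mul1r]; lra.
Qed.

Definition frame s : 'M[R]_3 :=
  let ab := xget (0, 0) [set ab | angles_ok ab /\ sph ab.1 ab.2 = s] in
  Zrot ab.1 *m Yrot ab.2.

Lemma TmapE p : Tmap p = frame p.1 *m Zrot (2 * pi * p.2).
Proof. by []. Qed.

Lemma SO3_frame s : SO3 (frame s).
Proof. by apply: SO3_mul; [exact: SO3_Zrot | exact: SO3_Yrot]. Qed.

Lemma frame_nvec s : S2 s -> frame s *m nvec R = s.
Proof.
move=> [ab [ab_ok sab]]; rewrite /frame.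
set P := [set ab | angles_ok ab /\ sph ab.1 ab.2 = s].
by case: (@xgetPex _ (0, 0) P (ex_intro _ ab (conj ab_ok (esym sab)))).
Qed.

Lemma SO3_Tmap p : SO3 (Tmap p).
Proof. by rewrite TmapE; apply: SO3_mul; [exact: SO3_frame | exact: SO3_Zrot]. Qed.

Lemma Tmap_nvec p : S2 p.1 -> Tmap p *m nvec R = p.1.
Proof. by move=> p1_S2; rewrite TmapE -mulmxA Zrot_nvec frame_nvec. Qed.

Lemma Tinv_spec M : SO3 M -> S2H (Tinv M) /\ Tmap (Tinv M) = M.
Proof.
move=> M_SO3; rewrite /Tinv; apply: (@xgetPex _ (nvec R, 0) [set p | S2H p /\ Tmap p = M]).
have Mn_S2 := SO3_nvec_S2 M_SO3.
have [t Mt] := SO3_same_nvec (SO3_frame (M *m nvec R)) M_SO3 (frame_nvec Mn_S2).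
have [h [h_itv Zh]] := Zrot_turn t.
by exists (M *m nvec R, h); split; [split | rewrite TmapE /= Zh -Mt].
Qed.

Lemma Tinv_fst M : SO3 M -> (Tinv M).1 = M *m nvec R.
Proof. by move=> /Tinv_spec[[Tinv_S2 _] TinvK]; rewrite -{2}TinvK Tmap_nvec. Qed.

Lemma Tinv_mulZrot M : SO3 M -> exists th, forall g,
  [/\ (Tinv (M *m Zrot g)).1 = M *m nvec R, 0 <= (Tinv (M *m Zrot g)).2 <= 1
    & Zrot (2 * pi * (Tinv (M *m Zrot g)).2) = Zrot (th + g)].
Proof.
move=> M_SO3; set A := frame (M *m nvec R).
have [th MA] := SO3_same_nvec (SO3_frame _) M_SO3 (frame_nvec (SO3_nvec_S2 M_SO3)).
exists th => g.
have MZ_SO3 : SO3 (M *m Zrot g) by apply: SO3_mul => //; exact: SO3_Zrot.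
have MZn : (Tinv (M *m Zrot g)).1 = M *m nvec R by rewrite Tinv_fst // -mulmxA Zrot_nvec.
have [[_ h_itv] TinvK] := Tinv_spec MZ_SO3.
split => //; apply: (@SO3_mulmxI A); first exact: SO3_frame.
by rewrite -Zrot_add mulmxA -MA -[in RHS]TinvK TmapE MZn.
Qed.

Lemma Tmap_actQ Q p : SO3 Q -> S2 p.1 ->
  exists phi, Tmap (actQ Q p) = Q *m Tmap p *m Zrot phi.
Proof.
move=> Q_SO3 p1_S2.
have QA_SO3 : SO3 (Q *m frame p.1) by apply: SO3_mul => //; exact: SO3_frame.
have Qp1_S2 : S2 (Q *m p.1) by rewrite -(frame_nvec p1_S2) mulmxA; exact: SO3_nvec_S2.
have [t Bt] : exists t, Q *m frame p.1 = frame (Q *m p.1) *m Zrot t.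
  apply: SO3_same_nvec => //; first exact: SO3_frame.
  by rewrite frame_nvec // -mulmxA frame_nvec.
exists (- t).
by rewrite !TmapE /= (mulmxA Q (frame _)) Bt -!mulmxA !Zrot_add (addrC t) subrK.
Qed.

End Rotations.

Section MatrixMeasurability.
Variable R : realType.

Lemma continuous_entries (T : topologicalType) m n (g : T -> 'M[R]_(m, n)) :
  (forall i j, continuous (fun x => g x i j)) -> continuous g.
Proof.
move=> g_cont x A /= [P P_nbhs PA].
have : \forall y \near x, forall i j, P i j (g y i j).
  by apply: filter_forall => i; apply: filter_forall => j; exact: g_cont.
by apply: filterS => y Pgy; apply: PA.
Qed.

Lemma continuous_mulmx (T : topologicalType) m n p
    (F : T -> 'M[R]_(m, n)) (G : T -> 'M[R]_(n, p)) :
  (forall i k, continuous (fun x => F x i k)) ->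
  (forall k j, continuous (fun x => G x k j)) -> continuous (fun x => F x *m G x).
Proof.
move=> F_cont G_cont; apply: continuous_entries => i j; under eq_fun do rewrite mxE.
apply: (continuous_big add_continuous) => k _ x.
by apply: continuousM; [exact: F_cont | exact: G_cont].
Qed.

Lemma continuous_det n : continuous (fun M : 'M[R]_n => \det M).
Proof.
apply: (continuous_big add_continuous) => s _ M.
apply: (@continuousM _ _ (fun=> _)); first exact: cst_continuous.
by apply: (continuous_big mul_continuous) => i _; exact: coord_continuous.
Qed.

Lemma closed_SO3 : closed (@SO3 R : set 'M[R]_3).
Proof.
have -> : @SO3 R = (fun M : 'M[R]_3 => M^T *m M) @^-1` [set 1%:M]
                   `&` (fun M : 'M[R]_3 => \det M) @^-1` [set 1] by [].
apply: closedI; apply: (continuous_closedP _).1.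
- apply: continuous_mulmx => i j; last exact: coord_continuous.
  by under eq_fun do rewrite mxE; exact: coord_continuous.
- exact/accessible_closed_set1/hausdorff_accessible/norm_hausdorff.
- exact: continuous_det.
- exact: closed_eq.
Qed.

Lemma measurable_SO3 : measurable (@SO3 R : set (MXB R)).
Proof.
rewrite -[@SO3 R]setCK; apply: measurableC; apply: sub_sigma_algebra.
by rewrite openC; exact: closed_SO3.
Qed.

Lemma measurable_mulmxl (Q : 'M[R]_3) :
  measurable_fun setT (fun M : MXB R => (Q *m M : MXB R)).
Proof.
apply: measurability; first reflexivity.
move=> _ [A A_open <-]; rewrite setTI; apply: sub_sigma_algebra.
apply: (@open_comp _ _ (fun M : 'M[R]_3 => Q *m M)) => // M _.
by apply: continuous_mulmx => i j; [exact: cst_continuous | exact: coord_continuous].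
Qed.

Lemma haar_fin_num_fun (mu : {measure set (MXB R) -> \bar R}) : haar mu -> fin_num_fun mu.
Proof.
move=> [muC muSO3 _] A mA; have mSO3 := measurable_SO3.
have muT : mu setT = 1%E.
  rewrite -(setUv (@SO3 R : set (MXB R))) measureU ?setICr //; last exact: measurableC.
  by rewrite -[1%E]adde0; congr (_ + _)%E; [exact: muSO3 | exact: muC].
rewrite ge0_fin_numE ?measure_ge0 // (le_lt_trans _ (ltry 1)) // -muT.
by apply: le_measure; rewrite ?inE.
Qed.

End MatrixMeasurability.

Ltac itv_subset :=
  move=> ? /=; rewrite !in_itv /= => /andP[? ?]; apply/andP; split; lra.

Section Translation.
Variable R : realType.
Local Notation leb := (@lebesgue_measure R).
Implicit Types (a b c : R) (k : R -> \bar R).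

Lemma measurable_addr c : measurable_fun setT (fun x : R => x + c).
Proof. by apply: measurable_funD => //; exact: measurable_cst. Qed.

Lemma measurable_fun_addr k (D E : set R) c : measurable D ->
  (forall y, E y -> D (y - c)) ->
  measurable_fun D (fun x => k (x + c)) -> measurable_fun E k.
Proof.
move=> mD ED mkc.
have msubc : measurable_fun E (fun y => y - c).
  exact: measurable_funS measurableT (@subsetT _ _) (measurable_addr (- c)).
apply: (eq_measurable_fun ((fun x => k (x + c)) \o (fun y => y - c))).
  by move=> y _ /=; rewrite subrK.
by apply: measurable_comp mD _ mkc msubc => _ [y /ED Dy <-].
Qed.

Lemma lebesgue_measure_addr c (A : set R) : measurable A ->
  pushforward leb (fun x => x + c) A = leb A.
Proof.
move=> mA.
have := @lebesgue_measure_unique R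
  (pushforward leb ((fun x => x + c) : _ -> measurableTypeR R)) _ A mA.
move=> /(_ (measurable_addr c)) leb_eq; apply/esym/leb_eq => _ [[a b] _ <-] /=.
rewrite /pushforward.
have -> : (fun x => x + c) @^-1` `]a, b]%classic = `]a - c, b - c]%classic.
  by apply/seteqP; split => x /=; rewrite !in_itv /= => /andP[? ?]; apply/andP; split; lra.
rewrite !lebesgue_measure_itv /= !lte_fin ltrD2r.
by case: ifP => // _; congr EFin; ring.
Qed.

Lemma ge0_integral_addr k a b c : (forall x : R, (0 <= k x)%E) ->
  measurable_fun `]a, b[ (fun x => k (x + c)) ->
  (\int[leb]_(x in `]a, b[) k (x + c)%R = \int[leb]_(y in `](a + c)%R, (b + c)%R[) k y)%E.
Proof.
move=> k_ge0 mkc.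
have mk : measurable_fun `]a + c, b + c[ k.
  by apply: measurable_fun_addr mkc => //; itv_subset.
have shift_itv : (fun x => x + c) @^-1` `]a + c, b + c[ = `]a, b[%classic.
  by apply/seteqP; split => x /=; rewrite !in_itv /= => /andP[? ?]; apply/andP; split; lra.
have := @ge0_integral_pushforward _ _ (measurableTypeR R) (measurableTypeR R) R
  (fun x => x + c) (measurable_addr c) leb _ k (measurable_itv _) mk (fun y _ => k_ge0 y).
rewrite shift_itv => <-.
apply: eq_measure_integral; first exact: measurable_addr.
by move=> ? A mA _; exact: lebesgue_measure_addr.
Qed.

Lemma ge0_integral_itv_split (f : R -> \bar R) (a c b : R) : a <= c <= b ->
  (forall x, (0 <= f x)%E) -> measurable_fun `]a, b[ f ->
  (\int[leb]_(x in `]a, b[) f x =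
   \int[leb]_(x in `]a, c[) f x + \int[leb]_(x in `]c, b[) f x)%E.
Proof.
move=> /andP[ac cb] f_ge0 mf.
have [->|c_neq] := eqVneq c b; first by rewrite set_itvoo0 integral_set0 adde0.
have abE : `]a, b[%classic = `]a, c]%classic `|` `]c, b[%classic.
  by apply: itv_bndbnd_setU; rewrite bnd_simp // lt_neqAle c_neq.
rewrite abE ge0_integral_setU //=.
- by rewrite integral_itv_bndoo //; apply: measurable_funS mf => //; itv_subset.
- by rewrite -abE.
apply: (@lt_disjoint _ `]a, c] `]c, b[) => x y; rewrite !in_itv /=.
by move=> /andP[_ xc] /andP[cy _]; exact: le_lt_trans xc cy.
Qed.

End Translation.

Lemma cos_eq1 (R : realType) (d : R) : - (2 * pi) < d < 2 * pi -> cos d = 1 -> d = 0.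
Proof.
move=> d_itv cd1; have pi_gt0 := pi_gt0 R.
have d_lt : `|d| < 2 * pi by rewrite ltr_norml.
have cd : cos `|d| = cos 0 by rewrite cos_norm cd1 cos0.
have pi_itv x : 0 <= x <= pi -> x \in `[0, pi] by rewrite in_itv.
apply/normr0_eq0; have [d_le|d_gt] := leP `|d| pi.
  by apply: cos_inj cd; apply: pi_itv; rewrite ?normr_ge0 ?d_le //; lra.
suff : 2 * pi - `|d| = 0 by lra.
have c2d : cos (2 * pi - `|d|) = cos 0 by rewrite addrC [2 * pi]mulr_natl cosD2pi cosN.
by apply: cos_inj c2d; apply: pi_itv; lra.
Qed.

Lemma Zrot_turn_inj (R : realType) (h y : R) : 0 <= h <= 1 -> 0 < y < 2 * pi ->
  Zrot (2 * pi * h) = Zrot y -> h = y / (2 * pi).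
Proof.
move=> h_itv y_itv /Zrot_eq_cos_sin[ch sh]; have pi_gt0 := pi_gt0 R.
have : 2 * pi * h - y = 0.
  by apply: cos_eq1; [nra | rewrite cosB ch sh -!expr2 cos2Dsin2].
move=> hy; apply: (@mulfI _ (2 * pi)); first lra.
by rewrite mulrCA divff ?mulr1; lra.
Qed.

Section FullTurn.
Variable R : realType.
Local Notation leb := (@lebesgue_measure R).
Variables (k : R -> \bar R) (th : R) (tau : R -> R).
Hypothesis k_ge0 : forall x, (0 <= k x)%E.
Hypothesis th_itv : 0 <= th < 2 * pi.
Hypothesis tau_turn : forall g, 0 <= tau g <= 1 /\ Zrot (2 * pi * tau g) = Zrot (th + g).
Hypothesis mktau : measurable_fun `[0, 2 * pi] (fun g => k (tau g)).

Lemma turn_tau_lo (g : R) : 0 < g < 2 * pi - th -> tau g = (g + th) / (2 * pi).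
Proof.
move=> g_itv; have [tau_itv Ztau] := tau_turn g.
have /andP[th_ge0 th_lt] := th_itv.
by rewrite (Zrot_turn_inj tau_itv _ Ztau) ?(addrC th) //; lra.
Qed.

Lemma turn_tau_hi (g : R) : 2 * pi - th < g <= 2 * pi -> tau g = (g + (th - 2 * pi)) / (2 * pi).
Proof.
move=> g_itv; have [tau_itv Ztau] := tau_turn g.
rewrite -[th + g](subrK (2 * pi)) Zrot_add2pi in Ztau.
have /andP[th_ge0 th_lt] := th_itv.
by rewrite (Zrot_turn_inj tau_itv _ Ztau); [congr (_ / _); ring | lra].
Qed.

Lemma measurable_turn_ktau (D : set R) : measurable D -> D `<=` `[0, 2 * pi] ->
  measurable_fun D (fun g => k (tau g)).
Proof. by move=> mD DP; exact: measurable_funS mktau. Qed.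

Lemma integral_turn_lo : measurable_fun `]th, 2 * pi[ (fun x => k (x / (2 * pi))) /\
  (\int[leb]_(g in `]0%R, (2 * pi - th)%R[) k (tau g) =
   \int[leb]_(x in `]th, (2 * pi)%R[) k (x / (2 * pi))%R)%E.
Proof.
have /andP[th_ge0 th_lt] := th_itv.
have mk : measurable_fun `]0, 2 * pi - th[ (fun x : R => k ((x + th) / (2 * pi))).
  apply: eq_measurable_fun (measurable_turn_ktau _ _) => //; last by itv_subset.
  by move=> g; rewrite inE /= in_itv /= => g_itv; rewrite turn_tau_lo.
split; first by apply: measurable_fun_addr mk => //; itv_subset.
transitivity (\int[leb]_(g in `]0%R, (2 * pi - th)%R[) k ((g + th) / (2 * pi))%R)%E.
  by apply: eq_integral => g; rewrite inE /= in_itv /= => g_itv; rewrite turn_tau_lo.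
by rewrite (ge0_integral_addr (fun x => k_ge0 (x / (2 * pi))) mk) add0r subrK.
Qed.

Lemma integral_turn_hi : measurable_fun `]0, th] (fun x => k (x / (2 * pi))) /\
  (\int[leb]_(g in `](2 * pi - th)%R, (2 * pi)%R[) k (tau g) =
   \int[leb]_(x in `]0%R, th[) k (x / (2 * pi))%R)%E.
Proof.
have /andP[th_ge0 th_lt] := th_itv.
have mk : measurable_fun `]2 * pi - th, 2 * pi] (fun x : R => k ((x + (th - 2 * pi)) / (2 * pi))).
  apply: eq_measurable_fun (measurable_turn_ktau _ _) => //; last by itv_subset.
  by move=> g; rewrite inE /= in_itv /= => g_itv; rewrite turn_tau_hi.
split; first by apply: measurable_fun_addr mk => //; itv_subset.
transitivity (\int[leb]_(g in `](2 * pi - th)%R, (2 * pi)%R[)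
                k ((g + (th - 2 * pi)) / (2 * pi))%R)%E.
  apply: eq_integral => g; rewrite inE /= in_itv /= => /andP[g_gt g_lt].
  by rewrite turn_tau_hi //; apply/andP; split; lra.
rewrite (ge0_integral_addr (fun x => k_ge0 (x / (2 * pi)))); last first.
  by apply: measurable_funS mk => //; itv_subset.
have -> : 2 * pi - th + (th - 2 * pi) = 0 by ring.
by have -> : 2 * pi + (th - 2 * pi) = th by ring.
Qed.

Lemma integral_turn_itv :
  (\int[leb]_(g in `[0%R, (2 * pi)%R]) k (tau g) =
   \int[leb]_(x in `]0%R, (2 * pi)%R[) k (x / (2 * pi))%R)%E.
Proof.
have /andP[th_ge0 th_lt] := th_itv.
have [mK_lo int_lo] := integral_turn_lo; have [mK_hi int_hi] := integral_turn_hi.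
have mK : measurable_fun `]0, 2 * pi[ (fun x => k (x / (2 * pi))).
  have -> : `]0, 2 * pi[%classic = `]0, th]%classic `|` `]th, 2 * pi[%classic.
    by apply: itv_bndbnd_setU; rewrite bnd_simp.
  by rewrite measurable_funU //; split.
rewrite integral_itv_bndoo; last by apply: measurable_turn_ktau => //; itv_subset.
rewrite (ge0_integral_itv_split (c := 2 * pi - th)); first last.
- by apply: measurable_turn_ktau => //; itv_subset.
- by move=> g; exact: k_ge0.
- by apply/andP; split; lra.
rewrite [in RHS](ge0_integral_itv_split (c := th)) //; last by apply/andP; split; lra.
by rewrite int_lo int_hi addeC.
Qed.

End FullTurn.

Lemma integral_full_turn (R : realType) (k : R -> \bar R) (th : R) (tau : R -> R) :
  (forall x, (0 <= k x)%E) ->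
  (forall g, 0 <= tau g <= 1 /\ Zrot (2 * pi * tau g) = Zrot (th + g)) ->
  measurable_fun `[0, 2 * pi] (fun g => k (tau g)) ->
  (\int[lebesgue_measure]_(g in `[0%R, (2 * pi)%R]) k (tau g) =
   \int[lebesgue_measure]_(x in `]0%R, (2 * pi)%R[) k (x / (2 * pi))%R)%E.
Proof.
move=> k_ge0 tau_turn mktau; have [u u_itv Zu] := Zrot_mod2pi th.
apply: (integral_turn_itv k_ge0 u_itv) mktau => g.
by have [tau_itv ->] := tau_turn g; rewrite -!Zrot_add Zu.
Qed.

Lemma integral_eq_of_ge0_comp d (T : measurableType d) (R : realType)
    (nu : {measure set T -> \bar R}) (D : set T) (u v : T -> R) :
  nu.-integrable D (EFin \o u) -> nu.-integrable D (EFin \o v) ->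
  (forall hh : R -> \bar R, (forall r, (0 <= hh r)%E) ->
     measurable_fun D (fun x => hh (u x)) -> measurable_fun D (fun x => hh (v x)) ->
     (\int[nu]_(x in D) hh (u x) = \int[nu]_(x in D) hh (v x))%E) ->
  (\int[nu]_(x in D) (EFin \o u) x = \int[nu]_(x in D) (EFin \o v) x)%E.
Proof.
move=> /measurable_int m_u /measurable_int m_v eq_hh.
have max_ge0 (r : \bar R) : (0 <= maxe r 0)%E by rewrite le_max lexx orbT.
rewrite integralE [RHS]integralE; congr (_ - _)%E.
- under eq_integral do rewrite funeposE.
  under [RHS]eq_integral do rewrite funeposE.
  apply: (eq_hh (fun r => maxe r%:E 0)%E) => [r||]; first exact: max_ge0.
  + by apply: eq_measurable_fun (measurable_funepos m_u) => x _; rewrite funeposE.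
  + by apply: eq_measurable_fun (measurable_funepos m_v) => x _; rewrite funeposE.
- under eq_integral do rewrite funenegE.
  under [RHS]eq_integral do rewrite funenegE.
  apply: (eq_hh (fun r => maxe (- r%:E) 0)%E) => [r||]; first exact: max_ge0.
  + by apply: eq_measurable_fun (measurable_funeneg m_u) => x _; rewrite funenegE.
  + by apply: eq_measurable_fun (measurable_funeneg m_v) => x _; rewrite funenegE.
Qed.

Section ConvDom.
Variable R : realType.
Local Notation leb := (@lebesgue_measure R).
Implicit Types (u : MXB R * R -> \bar R) (M : MXB R).

Lemma measurable_conv_dom : measurable (@conv_dom R).
Proof. by apply: measurableX; [exact: measurable_SO3 | exact: measurable_itv]. Qed.

Lemma fubini_F_conv_dom u M : SO3 M ->
  fubini_F leb (u \_ (@conv_dom R)) M = (\int[leb]_(g in `[0%R, (2 * pi)%R]) u (M, g))%E.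
Proof.
move=> M_SO3; rewrite /fubini_F [RHS]integral_mkcond; apply: eq_integral => g _.
have Mg_dom : ((M, g) \in @conv_dom R) = (g \in `[0, 2 * pi]%classic).
  by apply/idP/idP => [/set_mem [] _ g_itv | /set_mem g_itv]; apply/mem_set.
by rewrite /patch Mg_dom.
Qed.

Lemma fubini_F_conv_dom0 u M : ~ SO3 M -> fubini_F leb (u \_ (@conv_dom R)) M = 0%E.
Proof.
move=> M_SO3; rewrite /fubini_F; apply: integral0_eq => g _.
by rewrite /patch memNset // => -[].
Qed.

Lemma measurable_conv_dom_patch u :
  measurable_fun (@conv_dom R) u -> measurable_fun setT (u \_ (@conv_dom R)).
Proof. by move=> m_u; apply/(measurable_restrictT _ measurable_conv_dom). Qed.

Lemma measurable_conv_dom_section u M : SO3 M ->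
  measurable_fun (@conv_dom R) u -> measurable_fun `[0, 2 * pi] (fun g => u (M, g)).
Proof.
move=> M_SO3 /measurable_conv_dom_patch mp.
have := measurable_funS measurableT (@subsetT _ `[0, 2 * pi]) (measurable_fun_pair2 M mp).
apply: eq_measurable_fun => g; rewrite inE /= => g_itv.
by rewrite /patch mem_set.
Qed.

Lemma conv_integrandE (phi g : 'cV[R]_3 * R -> R) (q : 'cV[R]_3 * R) (M : MXB R) (t : R) :
  SO3 M -> conv_integrand phi g q (M, t) =
    adjT phi (M^T *m Tmap q) * g (M *m nvec R, (Tinv (M *m Zrot t)).2).
Proof.
move=> M_SO3; have MZ_SO3 : SO3 (M *m Zrot t) by apply: SO3_mul => //; exact: SO3_Zrot.
rewrite /conv_integrand /adjT /= SO3_invmx // [Tinv (M *m _)]surjective_pairing.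
by rewrite Tinv_fst // -mulmxA Zrot_nvec.
Qed.

Lemma integral_Tinv_turn (k : R -> \bar R) (M : 'M[R]_3) :
  SO3 M -> (forall x, (0 <= k x)%E) ->
  measurable_fun `[0, 2 * pi] (fun g => k (Tinv (M *m Zrot g)).2) ->
  (\int[leb]_(g in `[0%R, (2 * pi)%R]) k (Tinv (M *m Zrot g)).2 =
   \int[leb]_(x in `]0%R, (2 * pi)%R[) k (x / (2 * pi))%R)%E.
Proof.
move=> M_SO3 k_ge0; have [th Tinv_th] := Tinv_mulZrot M_SO3.
by apply: (integral_full_turn (th := th)) => // g; have [_ ? ?] := Tinv_th g; split.
Qed.

End ConvDom.

Section HaarTransfer.
Variable R : realType.
Variable mu : {measure set (MXB R) -> \bar R}.
Hypothesis mu_haar : haar mu.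
Local Notation leb := (@lebesgue_measure R).

(* A copy of [mu] carrying its finiteness as an instance, as Tonelli requires. *)
Definition fin_mu (A : set (MXB R)) : \bar R := mu A.

Let fin_mu0 : fin_mu set0 = 0%E. Proof. exact: measure0. Qed.
Let fin_mu_ge0 A : (0 <= fin_mu A)%E. Proof. exact: measure_ge0. Qed.
Let fin_mu_sigma_additive : semi_sigma_additive fin_mu.
Proof. exact: measure_semi_sigma_additive. Qed.
HB.instance Definition _ :=
  isMeasure.Build _ _ _ fin_mu fin_mu0 fin_mu_ge0 fin_mu_sigma_additive.
Let fin_mu_fin_num : fin_num_fun fin_mu. Proof. exact: haar_fin_num_fun. Qed.
HB.instance Definition _ := Measure_isFinite.Build _ _ _ fin_mu fin_mu_fin_num.

Lemma ge0_integral_conv_dom_mulmxl (Q : 'M[R]_3) (u1 u2 : MXB R * R -> \bar R) :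
  SO3 Q -> (forall z, (0 <= u1 z)%E) -> (forall z, (0 <= u2 z)%E) ->
  measurable_fun (@conv_dom R) u1 -> measurable_fun (@conv_dom R) u2 ->
  (forall M : MXB R, SO3 M ->
     (\int[leb]_(g in `[0%R, (2 * pi)%R]) u1 (M, g) =
      \int[leb]_(g in `[0%R, (2 * pi)%R]) u2 ((Q^T *m M : MXB R), g))%E) ->
  (\int[mu \x leb]_(z in @conv_dom R) u1 z = \int[mu \x leb]_(z in @conv_dom R) u2 z)%E.
Proof.
move=> Q_SO3 u1_ge0 u2_ge0 m_u1 m_u2 sections.
have [_ _ mu_inv] := mu_haar.
have patch_ge0 (u : MXB R * R -> \bar R) :
    (forall z, (0 <= u z)%E) -> forall z, (0 <= (u \_ (@conv_dom R)) z)%E.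
  by move=> u_ge0 z; rewrite /patch; case: ifP.
have fin_muE (u : MXB R * R -> \bar R) :
    (\int[mu \x leb]_(z in @conv_dom R) u z = \int[fin_mu \x leb]_z (u \_ (@conv_dom R)) z)%E.
  by rewrite integral_mkcond; apply: eq_measure_integral.
rewrite !fin_muE.
rewrite (@fubini_tonelli1 _ _ _ _ R fin_mu leb _ (measurable_conv_dom_patch m_u1)
  (patch_ge0 _ u1_ge0)).
rewrite (@fubini_tonelli1 _ _ _ _ R fin_mu leb _ (measurable_conv_dom_patch m_u2)
  (patch_ge0 _ u2_ge0)).
have F12 M : fubini_F leb (u1 \_ (@conv_dom R)) M =
             fubini_F leb (u2 \_ (@conv_dom R)) (Q^T *m M : MXB R).
  have [M_SO3|M_SO3] := pselect (SO3 M).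
    by rewrite !fubini_F_conv_dom ?sections //; apply: SO3_mul => //; exact: SO3_tr.
  rewrite !fubini_F_conv_dom0 // => QtM_SO3; apply: M_SO3.
  by rewrite -[M]mul1mx -(SO3_mulmxtr Q_SO3) -mulmxA; exact: SO3_mul.
under eq_integral do rewrite F12.
have mF2 := @measurable_fun_fubini_tonelli_F _ _ (MXB R) _ R leb _
  (measurable_conv_dom_patch m_u2) (patch_ge0 _ u2_ge0).
have F2_ge0 M : (0 <= fubini_F leb (u2 \_ (@conv_dom R)) M)%E.
  by apply: integral_ge0 => g _; exact: patch_ge0.
have := @ge0_integral_pushforward _ _ (MXB R) (MXB R) R (fun M : MXB R => (Q^T *m M : MXB R))
  (measurable_mulmxl Q^T) fin_mu setT _ measurableT mF2 (fun M _ => F2_ge0 M).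
rewrite preimage_setT => <-.
apply: eq_measure_integral; first exact: measurable_mulmxl.
by move=> ? A mA _; apply: mu_inv => //; exact: SO3_tr.
Qed.

End HaarTransfer.

Section Equivariance.
Variable R : realType.
Local Notation leb := (@lebesgue_measure R).
Variable mu : {measure set (MXB R) -> \bar R}.
Hypothesis mu_haar : haar mu.
Variables (psi f : 'cV[R]_3 * R -> R) (Q : 'M[R]_3) (p : 'cV[R]_3 * R).
Hypothesis psi_Zinv : forall (M : 'M[R]_3) (t : R), SO3 M -> adjT psi M = adjT psi (M *m Zrot t).
Hypotheses (Q_SO3 : SO3 Q) (p_S2H : S2H p).

(* Both sections are [g |-> k (tau g)] for the same [k], with different
   parametrisations [tau] of the fibre over [Q^T M n]. *)
Lemma integral_section_actQ (hh : R -> \bar R) (M : MXB R) :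
  (forall r, (0 <= hh r)%E) -> SO3 M ->
  measurable_fun `[0, 2 * pi] (fun g => hh (conv_integrand psi (LQ Q f) (actQ Q p) (M, g))) ->
  measurable_fun `[0, 2 * pi] (fun g => hh (conv_integrand psi f p ((Q^T *m M : MXB R), g))) ->
  (\int[leb]_(g in `[0%R, (2 * pi)%R]) hh (conv_integrand psi (LQ Q f) (actQ Q p) (M, g)) =
   \int[leb]_(g in `[0%R, (2 * pi)%R]) hh (conv_integrand psi f p ((Q^T *m M : MXB R), g)))%E.
Proof.
move=> hh_ge0 M_SO3 m1 m2; have [p1_S2 _] := p_S2H.
have QtM_SO3 : SO3 (Q^T *m M) by apply: SO3_mul => //; exact: SO3_tr.
set k := fun h => hh (adjT psi (M^T *m Q *m Tmap p) * f (Q^T *m M *m nvec R, h)).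
have E1 g : hh (conv_integrand psi (LQ Q f) (actQ Q p) (M, g)) = k (Tinv (M *m Zrot g)).2.
  have [phi Tphi] := Tmap_actQ Q_SO3 p1_S2.
  rewrite conv_integrandE // Tphi /LQ /actQ /= SO3_invmx // (mulmxA Q^T).
  rewrite (mulmxA M^T) (mulmxA M^T Q) -psi_Zinv //.
  by apply: SO3_mul; [apply: SO3_mul => //; exact: SO3_tr | exact: SO3_Tmap].
have E2 g : hh (conv_integrand psi f p ((Q^T *m M : MXB R), g)) = k (Tinv (Q^T *m M *m Zrot g)).2.
  by rewrite conv_integrandE // trmx_mul trmxK.
have mk1 : measurable_fun `[0, 2 * pi] (fun g => k (Tinv (M *m Zrot g)).2).
  by apply: eq_measurable_fun m1 => g _; exact: E1.
have mk2 : measurable_fun `[0, 2 * pi] (fun g => k (Tinv (Q^T *m M *m Zrot g)).2).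
  by apply: eq_measurable_fun m2 => g _; exact: E2.
under eq_integral do rewrite E1.
under [RHS]eq_integral do rewrite E2.
by rewrite !integral_Tinv_turn // => h; exact: hh_ge0.
Qed.

Lemma ge0_integral_conv_actQ (hh : R -> \bar R) : (forall r, (0 <= hh r)%E) ->
  measurable_fun (@conv_dom R) (fun z => hh (conv_integrand psi (LQ Q f) (actQ Q p) z)) ->
  measurable_fun (@conv_dom R) (fun z => hh (conv_integrand psi f p z)) ->
  (\int[mu \x leb]_(z in @conv_dom R) hh (conv_integrand psi (LQ Q f) (actQ Q p) z) =
   \int[mu \x leb]_(z in @conv_dom R) hh (conv_integrand psi f p z))%E.
Proof.
move=> hh_ge0 m1 m2.
apply: (ge0_integral_conv_dom_mulmxl mu_haar Q_SO3 (fun _ => hh_ge0 _) (fun _ => hh_ge0 _) m1 m2).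
move=> M M_SO3.
have QtM_SO3 : SO3 (Q^T *m M) by apply: SO3_mul => //; exact: SO3_tr.
apply: (integral_section_actQ (hh := hh)) => //.
- exact: (measurable_conv_dom_section M_SO3 m1).
- exact: (measurable_conv_dom_section QtM_SO3 m2).
Qed.

End Equivariance.

Unset Implicit Arguments.

Theorem theorem3 (R : realType) (mu : {measure set (MXB R) -> \bar R})
  (psi f : 'cV[R]_3 * R -> R) :
  haar mu ->
  (forall (M : 'M[R]_3) (t : R), SO3 M ->
     adjT psi M = adjT psi (M *m Zrot t)) ->
  forall (Q : 'M[R]_3) (p : 'cV[R]_3 * R), SO3 Q -> S2H p ->
  (mu \x lebesgue_measure)%E.-integrable (@conv_dom R)
     (EFin \o conv_integrand psi f p) ->
  (mu \x lebesgue_measure)%E.-integrable (@conv_dom R)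
     (EFin \o conv_integrand psi (LQ Q f) (actQ Q p)) ->
  sconv mu psi (LQ Q f) (actQ Q p) = sconv mu psi f p.
Proof.
move=> mu_haar psi_Zinv Q p Q_SO3 p_S2H int_f int_LQf.
rewrite /sconv /Rintegral (integral_eq_of_ge0_comp int_LQf int_f) //.
exact: ge0_integral_conv_actQ.
Qed.
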